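(* Let $(L,\wedge,\vee,0,1)$ be a bounded lattice and for $x,y\in L$ set $x\boxplus y:=\{z\in L\mid x\vee y=x\vee z=z\vee y\}$. Then $(L,\boxplus,0)$ is a commutative, total and reproductive mosaic, in which the inverse of each $x\in L$ is $x$ itself. Moreover, $1$ is the unique element $u\in L$ such that for all $x\in L$: $u\in x\boxplus x$ implies $x=u$.
   Context: A multioperation on a set $A$ is a function $\boxplus:A\times A\to\wp(A)$; for $x\in A$ and $Y\subseteq A$, $x\boxplus Y:=\bigcup_{y\in Y}x\boxplus y$. It is total if $x\boxplus y\ne\emptyset$ for all $x,y$; commutative if $x\boxplus y=y\boxplus x$; reproductive if $x\boxplus A=A$ for all $x\in A$. A neutral element $e$ satisfies $e\boxplus x=x\boxplus e=\{x\}$ for all $x$. For an endofunction $\rho$, $\rho$-reversibility means: $z\in x\boxplus y$ implies $x\in z\boxplus\rho(y)$ and $y\in\rho(x)\boxplus z$. A mosaic $(A,\boxplus,e)$ is a set with a multioperation with neutral element $e$ that is $\rho$-reversible for some endofunction $\rho$. An inverse of $x$ is an element $y$ with $e\in(x\boxplus y)\cap(y\boxplus x)$. *)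

From HB Require Import structures.
From mathcomp Require Import all_boot all_order.
Set Implicit Arguments. Unset Strict Implicit. Unset Printing Implicit Defensive.
Import Order.TTheory.
Local Open Scope order_scope.

(* A multioperation on A: [m x y z] means  z \in x [+] y.
   Subsets of A are represented as predicates A -> Prop. *)
Definition multiop (A : Type) := A -> A -> A -> Prop.

Section Mosaic.
Variables (A : Type) (m : multiop A).

Definition mop_total : Prop := forall x y : A, exists z, m x y z.

Definition mop_commutative : Prop := forall x y z : A, m x y z <-> m y x z.

(* x [+] A = \bigcup_{y in A} x [+] y = A *)
Definition mop_reproductive : Prop := forall x w : A, exists y, m x y w.

Definition mop_neutral (e : A) : Prop :=
  forall x z : A, (m e x z <-> z = x) /\ (m x e z <-> z = x).

Definition mop_reversible (rho : A -> A) : Prop :=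
  forall x y z : A, m x y z -> m z (rho y) x /\ m (rho x) z y.

Definition is_mosaic (e : A) : Prop :=
  mop_neutral e /\ exists rho : A -> A, mop_reversible rho.

Definition mop_inverse (e x y : A) : Prop := m x y e /\ m y x e.

End Mosaic.

Definition lat_mop (d : Order.disp_t) (L : latticeType d) : multiop L :=
  fun x y z => x `|` y = x `|` z /\ x `|` z = z `|` y.

(* [z \in x [+] y] says that the three joins of [x, y, z] taken two at a
   time coincide, a condition symmetric in [x, y, z]; this gives commutativity
   and [id]-reversibility.  The join [x `|` y] always lies in [x [+] y], and
   [x [+] x] is the down-set of [x], so the elements [u] with
   [u \in x [+] x -> x = u] are the maximal ones, i.e. [\top]. *)
From mathcomp Require Import all_boot all_order.
Import Order.TTheory.
Local Open Scope order_scope.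

Section LatticeMultiop.
Variables (d : Order.disp_t) (L : latticeType d).
Implicit Types x y z : L.

Lemma lat_mopE x y z :
  lat_mop x y z = (x `|` y = x `|` z /\ x `|` z = y `|` z).
Proof. by rewrite /lat_mop [z `|` y]joinC. Qed.

Lemma lat_mopC x y z : lat_mop x y z -> lat_mop y x z.
Proof.
rewrite !lat_mopE => -[xy_xz xz_yz].
by rewrite [y `|` x]joinC xy_xz xz_yz.
Qed.

Lemma lat_mop_commutative : mop_commutative (@lat_mop d L).
Proof. by move=> x y z; split; apply: lat_mopC. Qed.

Lemma lat_mop_reversible : mop_reversible (@lat_mop d L) id.
Proof.
move=> x y z; rewrite !lat_mopE => -[xy_xz xz_yz]; split.
- by rewrite [z `|` y]joinC [z `|` x]joinC -xz_yz -xy_xz joinC.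
- by rewrite [z `|` y]joinC xy_xz xz_yz.
Qed.

Lemma lat_mop_join x y : lat_mop x y (x `|` y).
Proof. by rewrite lat_mopE joinA joinxx joinCA joinxx. Qed.

Lemma lat_mop_total : mop_total (@lat_mop d L).
Proof. by move=> x y; exists (x `|` y); apply: lat_mop_join. Qed.

Lemma lat_mop_reproductive : mop_reproductive (@lat_mop d L).
Proof.
by move=> x w; exists (x `|` w); case: (lat_mop_reversible _ _ _ (lat_mop_join x w)).
Qed.

Lemma lat_mop_xx x z : lat_mop x x z <-> z <= x.
Proof.
rewrite lat_mopE joinxx; split => [[x_xz _] | /join_idPl xz_x].
- by rewrite x_xz leUr.
- by rewrite xz_x.
Qed.

End LatticeMultiop.

Section BottomMultiop.
Variables (d : Order.disp_t) (L : bLatticeType d).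
Implicit Types x y z : L.

Lemma lat_mop0x x z : lat_mop \bot x z <-> z = x.
Proof.
rewrite lat_mopE !join0x; split => [[-> //] | ->].
by rewrite joinxx.
Qed.

Lemma lat_mop_neutral : mop_neutral (@lat_mop d L) \bot.
Proof.
move=> x z; split; first exact: lat_mop0x.
by split=> [/lat_mopC/lat_mop0x | /lat_mop0x/lat_mopC].
Qed.

Lemma lat_mop_mosaic : is_mosaic (@lat_mop d L) \bot.
Proof. by split; [apply: lat_mop_neutral | exists id; apply: lat_mop_reversible]. Qed.

Lemma lat_mop_inverse x y : mop_inverse (@lat_mop d L) \bot x y <-> y = x.
Proof.
rewrite /mop_inverse !lat_mopE !joinx0; split => [[[_ ->] _] // | ->].
by rewrite joinxx.
Qed.

End BottomMultiop.

Theorem mainTheorem4 (d : Order.disp_t) (L : tbLatticeType d) :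
  is_mosaic (@lat_mop d L) \bot
  /\ mop_commutative (@lat_mop d L)
  /\ mop_total (@lat_mop d L)
  /\ mop_reproductive (@lat_mop d L)
  /\ (forall x y : L, mop_inverse (@lat_mop d L) \bot x y <-> y = x)
  /\ (forall x : L, lat_mop x x \top -> x = \top)
  /\ (forall u : L, (forall x : L, lat_mop x x u -> x = u) -> u = \top).
Proof.
split; first exact: lat_mop_mosaic.
split; first exact: lat_mop_commutative.
split; first exact: lat_mop_total.
split; first exact: lat_mop_reproductive.
split; first exact: lat_mop_inverse.
split; first by move=> x /lat_mop_xx; rewrite le1x => /eqP.
by move=> u /(_ \top) top_u; rewrite top_u //; apply/lat_mop_xx/lex1.
Qed.
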